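(* Let $R$ be a Dedekind domain, $I\subseteq R$ an ideal with $R/I$ finite, and $G\in R^{n\times n}$. Let $U,V\in\mathrm{GL}_n(R/I)$ and $d_1,\ldots,d_n\in R$ with $d_{i+1}R+I\subseteq d_iR+I$ for every $i$ be such that $G\equiv U D V\bmod I$ with $D=\mathrm{diag}(d_1,\ldots,d_n)$. Consider a random symmetric $n\times n$ matrix $X\in R^{n\times n}$ whose upper-triangular entries $\{X_{i,j}:i\leq j\}$ have independent and uniformly distributed reductions in $R/I$. Then $$\mathbb{P}\bigl(G^{T}XG\equiv 0\bmod I\bigr)=\prod_{i=1}^n\prod_{j=i}^n\frac{\#\{k\in R/I:\ kd_id_j\equiv 0\bmod I\}}{\mathcal{N}_R(I)}.$$
   Context: The norm of an ideal $I\subseteq R$ is $\mathcal{N}_R(I)=\#(R/I)$. Such $U,V,d_1,\ldots,d_n$ (a Smith normal form of $G$ over $R/I$) always exist since $R/I$ is a principal ideal ring. *)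

From HB Require Import structures.
From mathcomp Require Import all_boot all_order all_algebra.
Set Implicit Arguments. Unset Strict Implicit. Unset Printing Implicit Defensive.
Import Order.TTheory GRing.Theory Num.Theory.
Local Open Scope ring_scope.

Definition is_ideal (R : comNzRingType) (J : R -> Prop) : Prop :=
  [/\ J 0, (forall x y, J x -> J y -> J (x + y)) & (forall r x, J x -> J (r * x))].

Definition ideal_prime (R : comNzRingType) (J : R -> Prop) : Prop :=
  is_ideal J /\ ~ J 1 /\ (forall x y, J (x * y) -> J x \/ J y).

Definition ideal_maximal (R : comNzRingType) (J : R -> Prop) : Prop :=
  is_ideal J /\ ~ J 1 /\
  (forall K : R -> Prop, is_ideal K -> (forall x, J x -> K x) -> K 1 \/ (forall x, K x -> J x)).

Definition noetherian (R : comNzRingType) : Prop :=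
  forall J : R -> Prop, is_ideal J ->
    exists s : seq R, forall x, J x <->
      exists c : 'I_(size s) -> R, x = \sum_(k < size s) c k * s`_k.

Definition integrally_closed (R : idomainType) : Prop :=
  forall x : {fraction R},
    (exists p : {poly R}, p \is monic /\ root (map_poly (@tofrac R) p) x) ->
    exists r : R, x = tofrac r.

Definition dim_le1 (R : comNzRingType) : Prop :=
  forall J : R -> Prop, ideal_prime J -> (exists x, J x /\ x != 0) -> ideal_maximal J.

Definition dedekind (R : idomainType) : Prop :=
  [/\ noetherian R, integrally_closed R & dim_le1 R].

Definition in_principal_plus (R : comNzRingType) (a : R) (J : R -> Prop) (x : R) : Prop :=
  exists r s, J s /\ x = a * r + s.

Definition mx_invertible (S : comPzRingType) (n : nat) (U : 'M[S]_n) : Prop :=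
  exists W : 'M[S]_n, U *m W = 1%:M /\ W *m U = 1%:M.

Definition upper_idx (n : nat) := {p : 'I_n * 'I_n | (p.1 <= p.2)%N}.

Lemma upper_pair_proof (n : nat) (i j : 'I_n) :
  let p := if (i <= j)%N then (i, j) else (j, i) in (p.1 <= p.2)%N.
Proof. by rewrite /=; case: (leqP i j) => //= /ltnW. Qed.

(* The upper-triangular position {i,j} (i.e. (min, max)). *)
Definition upper_pair (n : nat) (i j : 'I_n) : upper_idx n :=
  exist (fun p : 'I_n * 'I_n => (p.1 <= p.2)%N) _ (upper_pair_proof i j).

Definition sym_of_upper (T : Type) (n : nat) (a : upper_idx n -> T) : 'M[T]_n :=
  \matrix_(i, j) a (upper_pair i j).

(* The congruence X |-> U^T X U permutes the symmetric matrices over R/I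
   (U is invertible), and multiplying by the invertible V on both sides does
   not change whether a matrix vanishes.  Hence G^T X G = V^T D (U^T X U) D V
   vanishes mod I exactly as often as D X D does for uniform symmetric X, and
   D X D = 0 splits into the independent entrywise conditions
   X_ij d_i d_j = 0 for i <= j. *)
From HB Require Import structures.
From mathcomp Require Import all_boot all_order all_algebra.
Import Order.TTheory GRing.Theory Num.Theory.
Local Open Scope ring_scope.
Set Implicit Arguments. Unset Strict Implicit.

Lemma big_upper_idx (T : Type) (idx : T) (op : Monoid.com_law idx) (n : nat)
    (F : 'I_n -> 'I_n -> T) :
  \big[op/idx]_(i < n) \big[op/idx]_(j < n | (i <= j)%N) F i j
  = \big[op/idx]_(p : upper_idx n) F (val p).1 (val p).2.
Proof.
rewrite pair_big_dep /=.
rewrite (eq_bigl [pred p : 'I_n * 'I_n | (p.1 <= p.2)%N]) //.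
by rewrite big_sub.
Qed.

Section SymmetricOfUpper.
Variables (T : Type) (n : nat).

Definition upper_of_mx (M : 'M[T]_n) : {ffun upper_idx n -> T} :=
  [ffun p => M (val p).1 (val p).2].

Lemma upper_pairK (p : upper_idx n) : upper_pair (val p).1 (val p).2 = p.
Proof. by apply: val_inj => /=; case: p => [[i j]] /= ->. Qed.

Lemma sym_of_upperK (a : {ffun upper_idx n -> T}) : upper_of_mx (sym_of_upper a) = a.
Proof. by apply/ffunP => p; rewrite ffunE mxE upper_pairK. Qed.

Lemma upper_of_mxK (M : 'M[T]_n) : M^T = M -> sym_of_upper (upper_of_mx M) = M.
Proof.
move=> symM; apply/matrixP => i j; rewrite mxE ffunE /=.
by case: leqP => // _; rewrite -{1}symM mxE.
Qed.

Lemma tr_sym_of_upper (a : upper_idx n -> T) : (sym_of_upper a)^T = sym_of_upper a.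
Proof.
apply/matrixP => i j; rewrite !mxE; congr (a _); apply: val_inj => /=.
by case: (ltngtP i j) => [||/val_inj->].
Qed.

End SymmetricOfUpper.

Section Congruence.
Variables (S : comPzRingType) (n : nat).
Implicit Types (M U W : 'M[S]_n).

Lemma tr_conjK U W M : U *m W = 1%:M -> W^T *m (U^T *m M *m U) *m W = M.
Proof.
move=> UW; rewrite !mulmxA -trmx_mul UW trmx1 mul1mx.
by rewrite -mulmxA UW mulmx1.
Qed.

Lemma tr_conj_eq0 U W M : U *m W = 1%:M -> (U^T *m M *m U == 0) = (M == 0).
Proof.
move=> UW; apply/eqP/eqP => [conjM0|->]; last by rewrite mulmx0 mul0mx.
by rewrite -(tr_conjK M UW) conjM0 mulmx0 mul0mx.
Qed.

End Congruence.

Section Counting.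
Variables (S : finComPzRingType) (n : nat).

Lemma card_sym_tr_conj (U W : 'M[S]_n) (P : pred 'M[S]_n) :
  U *m W = 1%:M ->
  #|[set a : {ffun upper_idx n -> S} | P (U^T *m sym_of_upper a *m U)]|
  = #|[set a : {ffun upper_idx n -> S} | P (sym_of_upper a)]|.
Proof.
move=> UW.
pose f (a : {ffun upper_idx n -> S}) := upper_of_mx (U^T *m sym_of_upper a *m U).
have sym_f a : sym_of_upper (f a) = U^T *m sym_of_upper a *m U.
  by rewrite upper_of_mxK // !trmx_mul trmxK tr_sym_of_upper mulmxA.
have f_inj : injective f.
  move=> a b fab; rewrite -(sym_of_upperK a) -(sym_of_upperK b).
  by rewrite -(tr_conjK (sym_of_upper a) UW) -(tr_conjK (sym_of_upper b) UW) -!sym_f fab.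
rewrite -[RHS](card_preimset _ f_inj); apply: eq_card => a.
by rewrite !inE sym_f.
Qed.

Lemma card_diag_sym_diag_eq0 (r : 'rV[S]_n) :
  #|[set a : {ffun upper_idx n -> S} | diag_mx r *m sym_of_upper a *m diag_mx r == 0]|
  = \prod_(p : upper_idx n) #|[set k : S | k * r 0 (val p).1 * r 0 (val p).2 == 0]|.
Proof.
pose F (p : upper_idx n) := [set k : S | k * r 0 (val p).1 * r 0 (val p).2 == 0].
have -> : [set a : {ffun upper_idx n -> S} | diag_mx r *m sym_of_upper a *m diag_mx r == 0]
          = [set a | a \in family (fun p => mem (F p))].
  apply/setP => a; rewrite !inE; apply/eqP/familyP => [DaD0 p | aF].
    move/matrixP/(_ (val p).1 (val p).2): DaD0.
    by rewrite mul_mx_diag mul_diag_mx !mxE upper_pairK inE [r 0 _ * a p]mulrC => ->.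
  apply/matrixP => i j; rewrite mul_mx_diag mul_diag_mx !mxE.
  have := aF (upper_pair i j); rewrite inE /= [r 0 i * _]mulrC.
  by case: leqP => _ /eqP //; rewrite mulrAC.
rewrite cardsE card_family foldrE big_map big_enum /=.
by apply: eq_bigr => p _; apply: eq_card => k; rewrite inE.
Qed.

End Counting.

Theorem lemma2p1 (R : idomainType) (S : finComPzRingType)
  (pi : {rmorphism R -> S}) (I : R -> Prop) (n : nat)
  (G : 'M[R]_n) (U V : 'M[S]_n) (d : 'I_n -> R) :
  dedekind R ->
  is_ideal I ->
  (forall x : R, pi x = 0 <-> I x) ->
  (forall y : S, exists x : R, pi x = y) ->
  mx_invertible U -> mx_invertible V ->
  (forall i j : 'I_n, nat_of_ord j = (nat_of_ord i).+1 ->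
     forall x : R, in_principal_plus (d j) I x -> in_principal_plus (d i) I x) ->
  map_mx pi G = U *m diag_mx (\row_i pi (d i)) *m V ->
  (#|[set a : {ffun upper_idx n -> S} |
        (map_mx pi G)^T *m sym_of_upper a *m map_mx pi G == 0]|%:R
     / #|{ffun upper_idx n -> S}|%:R : rat)
  = \prod_(i < n) \prod_(j < n | (i <= j)%N)
      (#|[set k : S | k * pi (d i) * pi (d j) == 0]|%:R / #|S|%:R).
Proof.
move=> _ _ _ _ [Wu [UWu _]] [Wv [VWv _]] _ piG.
set D := diag_mx (\row_i pi (d i)).
have GXG_eq0 (X : 'M[S]_n) :
    ((map_mx pi G)^T *m X *m map_mx pi G == 0) = (D *m (U^T *m X *m U) *m D == 0).
  rewrite piG -/D !trmx_mul tr_diag_mx -/D -[RHS](tr_conj_eq0 _ VWv).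
  by rewrite !mulmxA.
under eq_finset => a do rewrite GXG_eq0.
rewrite (card_sym_tr_conj (fun M => D *m M *m D == 0) UWu) card_diag_sym_diag_eq0.
rewrite big_upper_idx prodf_div prodr_const card_ffun card_sig natrX natr_prod.
by congr (_ / _); apply: eq_bigr => p _; rewrite !mxE.
Qed.
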